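(* For every $\vec\beta=(\beta_1,\beta_2,\beta_3)\in\mathbb R^3$ there exists a smooth, trace-free, divergence-free symmetric $(0,2)$-tensor $\sigma$ on $\mathbb R^3$ with compact support in $A_1=\{1<|x|<2\}$, satisfying $L\sigma=0$ and \[\int_{A_1}x^p\sum_{i,j,k}(\sigma_{ij,k})^2\,dx=\beta_p\quad(p=1,2,3).\]
   Context: Cartesian coordinates on $\mathbb R^3$ with Euclidean metric; commas denote partial derivatives; trace and divergence are Euclidean. $L\sigma=\sum_{i,j}(\sigma_{ij,ij}-\sigma_{ii,jj})$. *)

From Stdlib Require Import Reals.
From Coquelicot Require Import Coquelicot.
Open Scope R_scope.

(* Points of R^3; coordinates are indexed 0,1,2 (paper's 1,2,3). *)
Definition pt := (R * R * R)%type.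

Definition coord (i : nat) (x : pt) : R :=
  match i with
  | 0%nat => fst (fst x)
  | 1%nat => snd (fst x)
  | _ => snd x
  end.

Definition upd (i : nat) (x : pt) (t : R) : pt :=
  match i with
  | 0%nat => (t, snd (fst x), snd x)
  | 1%nat => (fst (fst x), t, snd x)
  | _ => (fst (fst x), snd (fst x), t)
  end.

Definition enorm (x : pt) : R :=
  sqrt (coord 0 x ^ 2 + coord 1 x ^ 2 + coord 2 x ^ 2).

Definition partial (i : nat) (f : pt -> R) (x : pt) : R :=
  Derive (fun t => f (upd i x t)) (coord i x).

Fixpoint dpart (l : list nat) (f : pt -> R) : pt -> R :=
  match l with
  | nil => f
  | cons i l' => partial i (dpart l' f)
  end.

Definition smooth (f : pt -> R) : Prop :=
  forall l : list nat, List.Forall (fun i => (i < 3)%nat) l ->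
    (forall x : pt, continuous (dpart l f) x) /\
    (forall i : nat, (i < 3)%nat -> forall x : pt,
        ex_derive (fun t => dpart l f (upd i x t)) (coord i x)).

Definition sum3 (F : nat -> R) : R := F 0%nat + F 1%nat + F 2%nat.

Definition annulus1 (x : pt) : Prop := 1 < enorm x < 2.

(* f has compact support contained in A: f vanishes outside a compact
   (= closed and bounded, Heine-Borel) set K contained in A *)
Definition compact_support_in (A : pt -> Prop) (f : pt -> R) : Prop :=
  exists K : pt -> Prop,
    closed K /\ (exists M : R, forall x, K x -> enorm x <= M) /\
    (forall x, K x -> A x) /\ (forall x, ~ K x -> f x = 0).

(* symmetric (0,2)-tensor field on R^3: components sigma i j, i j < 3 *)
Definition tensor := nat -> nat -> pt -> R.

Definition symmetric (s : tensor) : Prop :=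
  forall i j, (i < 3)%nat -> (j < 3)%nat -> forall x, s i j x = s j i x.

Definition tensor_smooth (s : tensor) : Prop :=
  forall i j, (i < 3)%nat -> (j < 3)%nat -> smooth (s i j).

Definition trace_free (s : tensor) : Prop :=
  forall x, sum3 (fun i => s i i x) = 0.

Definition div_free (s : tensor) : Prop :=
  forall i, (i < 3)%nat -> forall x, sum3 (fun j => partial j (s i j) x) = 0.

Definition Lop (s : tensor) (x : pt) : R :=
  sum3 (fun i => sum3 (fun j =>
    partial j (partial i (s i j)) x - partial j (partial j (s i i)) x)).

(* Integral over R^3 of a function supported in the cube [-2,2]^3
   (in particular in A_1), as an iterated Riemann integral. *)
Definition int_cube (f : pt -> R) : R :=
  RInt (fun a => RInt (fun b => RInt (fun c => f (a, b, c)) (-2) 2) (-2) 2) (-2) 2.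

Definition grad_sq (s : tensor) (x : pt) : R :=
  sum3 (fun i => sum3 (fun j => sum3 (fun k => (partial k (s i j) x) ^ 2))).

From Stdlib Require Import Reals.
From Coquelicot Require Import Coquelicot.
Open Scope R_scope.
From Stdlib Require Import Lra Lia List FunctionalExtensionality Classical.

(* Let E be a smooth even bump supported in (-1/5, 1/5) and phi(x) = E(x1) E(x2) E(x3).
   Suitable fourth derivatives of phi form a symmetric, trace-free, divergence-free
   tensor with L sigma = 0: these conditions are identities between commuting partial
   derivatives of phi. Six translates of it, scaled by constants c_k, are placed in
   disjoint cubes centred at +-3/2 e_q inside A_1, so the energy density
   sum (sigma_ij,k)^2 is the sum of c_k^2 times the energy density of cube k. By the
   reflection symmetry x_p -> -x_p the weighted integral of x_p against the energy of
   cube k vanishes unless that cube lies on the x_p-axis, and then it has the sign of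
   its centre. Choosing c_k^2 for the two cubes on each axis gives every beta_p. *)

Definition lsum {A : Type} (g : A -> R) (L : list A) : R :=
  fold_right (fun t acc => g t + acc) 0 L.

Lemma lsum_app {A : Type} (g : A -> R) (L1 L2 : list A) :
  lsum g (L1 ++ L2) = lsum g L1 + lsum g L2.
Proof. induction L1 as [|t L1 IH]; simpl; [ring | unfold lsum in *; rewrite IH; ring]. Qed.

Lemma lsum_map {A B : Type} (g : B -> R) (h : A -> B) (L : list A) :
  lsum g (map h L) = lsum (fun t => g (h t)) L.
Proof. induction L as [|t L IH]; simpl; [reflexivity | unfold lsum in *; now rewrite IH]. Qed.

Lemma is_derive_eq (f : R -> R) (x l l' : R) :
  is_derive f x l -> l = l' -> is_derive f x l'.
Proof. now intros H <-. Qed.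

Lemma is_derive_Rext (f g : R -> R) (x l : R) :
  (forall t, f t = g t) -> is_derive f x l -> is_derive g x l.
Proof. apply is_derive_ext. Qed.

Lemma is_derive_Rmult (f g : R -> R) (x df dg : R) :
  is_derive f x df -> is_derive g x dg ->
  is_derive (fun t => f t * g t) x (df * g x + f x * dg).
Proof. intros Hf Hg; apply (is_derive_mult f g x df dg Hf Hg), Rmult_comm. Qed.

Lemma is_derive_Rplus (f g : R -> R) (x df dg : R) :
  is_derive f x df -> is_derive g x dg -> is_derive (fun t => f t + g t) x (df + dg).
Proof. apply (is_derive_plus f g). Qed.

Lemma continuous_Rplus {T : UniformSpace} (f g : T -> R) x :
  continuous f x -> continuous g x -> continuous (fun y => f y + g y) x.
Proof. apply (continuous_plus f g). Qed.

Lemma continuous_Rmult {T : UniformSpace} (f g : T -> R) x :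
  continuous f x -> continuous g x -> continuous (fun y => f y * g y) x.
Proof. apply (continuous_mult f g). Qed.

Lemma is_derive_affine_comp (f : R -> R) (a b t df : R) :
  is_derive f (a * t + b) df -> is_derive (fun u => f (a * u + b)) t (a * df).
Proof.
  intros Hf. apply (is_derive_comp f (fun u => a * u + b) t df a Hf).
  auto_derive; [auto | ring].
Qed.

(** * The flat function [u |-> exp (-1/u)] and its derivatives *)

(* Polynomials in one variable, kept as syntax so that they can be differentiated. *)
Inductive rpoly := PConst (c : R) | PAdd (p q : rpoly) | POpp (p : rpoly) | PMulX (p : rpoly).

Fixpoint peval (p : rpoly) (y : R) : R :=
  match p with
  | PConst c => c
  | PAdd p q => peval p y + peval q y
  | POpp p => - peval p y
  | PMulX p => y * peval p y
  end.

Fixpoint pderiv (p : rpoly) : rpoly :=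
  match p with
  | PConst _ => PConst 0
  | PAdd p q => PAdd (pderiv p) (pderiv q)
  | POpp p => POpp (pderiv p)
  | PMulX p => PAdd p (PMulX (pderiv p))
  end.

Lemma is_derive_peval p (y : R) : is_derive (peval p) y (peval (pderiv p) y).
Proof.
  induction p; simpl.
  - apply (is_derive_const c).
  - now apply is_derive_Rplus.
  - now apply (is_derive_opp (peval p)).
  - eapply is_derive_eq; [apply (is_derive_Rmult (fun t => t)); [apply is_derive_id | exact IHp]|].
    unfold one; simpl. ring.
Qed.

Lemma peval_growth p :
  exists C d, 0 <= C /\ forall y, 0 <= y -> Rabs (peval p y) <= C * (1 + y) ^ d.
Proof.
  induction p as [c | p [C1 [d1 [HC1 H1]]] q [C2 [d2 [HC2 H2]]] | p [C [d [HC H]]]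
                 | p [C [d [HC H]]]]; simpl.
  - exists (Rabs c), 0%nat. split; [apply Rabs_pos | intros; simpl; lra].
  - exists (C1 + C2), (max d1 d2). split; [lra |]. intros y Hy.
    assert (M1 : (1 + y) ^ d1 <= (1 + y) ^ max d1 d2) by (apply Rle_pow; [lra | lia]).
    assert (M2 : (1 + y) ^ d2 <= (1 + y) ^ max d1 d2) by (apply Rle_pow; [lra | lia]).
    specialize (H1 y Hy). specialize (H2 y Hy).
    eapply Rle_trans; [apply Rabs_triang |].
    pose proof (Rmult_le_compat_l C1 _ _ HC1 M1).
    pose proof (Rmult_le_compat_l C2 _ _ HC2 M2). lra.
  - exists C, d. split; [exact HC |]. intros y Hy. rewrite Rabs_Ropp. auto.
  - exists C, (S d). split; [exact HC |]. intros y Hy. specialize (H y Hy).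
    rewrite Rabs_mult, (Rabs_right y) by lra. simpl.
    pose proof (Rabs_pos (peval p y)).
    apply Rle_trans with ((1 + y) * (C * (1 + y) ^ d)); [apply Rmult_le_compat |]; lra.
Qed.

(* The n-th derivative of [exp (-1/u)] is [flat_poly n (1/u) * exp (-1/u)] on [u > 0]. *)
Fixpoint flat_poly (n : nat) : rpoly :=
  match n with
  | O => PConst 1
  | S n => PMulX (PMulX (PAdd (flat_poly n) (POpp (pderiv (flat_poly n)))))
  end.

Definition flat_pos (n : nat) (u : R) : R := peval (flat_poly n) (/ u) * exp (- / u).

Lemma is_derive_flat_pos n (u : R) : u <> 0 -> is_derive (flat_pos n) u (flat_pos (S n) u).
Proof.
  intros Hu. unfold flat_pos.
  eapply is_derive_eq.
  - apply (is_derive_Rmult _ _ u (- / u ^ 2 * peval (pderiv (flat_poly n)) (/ u))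
                                 (exp (- / u) * / u ^ 2)).
    + apply (is_derive_comp (peval (flat_poly n)) (fun t => / t) u _ (- / u ^ 2)).
      * apply is_derive_peval.
      * auto_derive; [auto | field; auto].
    + auto_derive; [auto | field; auto].
  - simpl. field. auto.
Qed.

Lemma exp_INR_mult n (t : R) : exp (INR n * t) = exp t ^ n.
Proof.
  induction n as [|n IH].
  - simpl. now rewrite Rmult_0_l, exp_0.
  - rewrite S_INR, Rmult_plus_distr_r, Rmult_1_l, exp_plus, IH. simpl. ring.
Qed.

Lemma pow_le_exp m (y : R) : 0 < y -> y ^ S m <= INR (S m) ^ S m * exp y.
Proof.
  intros Hy. set (N := INR (S m)).
  assert (HN : 0 < N) by (apply lt_0_INR; lia).
  replace (exp y) with (exp (y / N) ^ S m) by (unfold N; rewrite <- exp_INR_mult; f_equal; fold N; field; lra).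
  replace (y ^ S m) with (N ^ S m * (y / N) ^ S m)
    by (rewrite <- Rpow_mult_distr; f_equal; field; lra).
  apply Rmult_le_compat_l; [apply pow_le; lra |].
  apply pow_incr. pose proof (exp_ineq1_le (y / N)).
  split; [apply Rlt_le, Rdiv_lt_0_compat |]; lra.
Qed.

(* Polynomial growth in [1/u] is beaten by [exp (-1/u)]. *)
Lemma flat_pos_quadratic_bound n :
  exists K, 0 <= K /\ forall u, 0 < u <= 1 -> Rabs (flat_pos n u) <= K * u ^ 2.
Proof.
  destruct (peval_growth (flat_poly n)) as [C [d [HC HG]]].
  set (K0 := INR (S (S d)) ^ S (S d)).
  assert (HK0 : 0 <= K0) by (apply pow_le, pos_INR).
  exists (C * 2 ^ d * K0). split.
  { apply Rmult_le_pos; [apply Rmult_le_pos; [auto | apply pow_le; lra] | auto]. }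
  intros u Hu. unfold flat_pos. set (y := / u).
  assert (Hy : 1 <= y) by (unfold y; rewrite <- Rinv_1; apply Rinv_le_contravar; lra).
  assert (Huy : u = / y) by (unfold y; now rewrite Rinv_inv).
  rewrite Rabs_mult, (Rabs_right (exp _)) by (left; apply exp_pos).
  specialize (HG y ltac:(lra)).
  assert (Hpoly : (1 + y) ^ d <= 2 ^ d * y ^ d)
    by (rewrite <- Rpow_mult_distr; apply pow_incr; lra).
  assert (Hexp : y ^ d * exp (- y) <= K0 * u ^ 2).
  { rewrite Huy. apply Rmult_le_reg_r with (y ^ 2 * exp y).
    { apply Rmult_lt_0_compat; [apply pow_lt; lra | apply exp_pos]. }
    replace (K0 * (/ y) ^ 2 * (y ^ 2 * exp y)) with (K0 * exp y) by (field; lra).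
    replace (y ^ d * exp (- y) * (y ^ 2 * exp y)) with (y ^ S (S d) * (exp (- y) * exp y))
      by (simpl; ring).
    rewrite <- exp_plus, Rplus_opp_l, exp_0, Rmult_1_r. apply pow_le_exp. lra. }
  pose proof (pow_le y d ltac:(lra)). pose proof (exp_pos (- y)).
  apply Rle_trans with (C * (2 ^ d * y ^ d) * exp (- y)).
  - apply Rmult_le_compat_r; [lra |]. eapply Rle_trans; [apply HG |].
    apply Rmult_le_compat_l; auto.
  - replace (C * (2 ^ d * y ^ d) * exp (- y)) with (C * 2 ^ d * (y ^ d * exp (- y))) by ring.
    rewrite (Rmult_assoc (C * 2 ^ d) K0). apply Rmult_le_compat_l; [| exact Hexp].
    apply Rmult_le_pos; [auto | apply pow_le; lra].
Qed.

Lemma is_derive_zero_of_quadratic_bound (f : R -> R) (K : R) :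
  f 0 = 0 -> (forall u, u <> 0 -> Rabs u <= 1 -> Rabs (f u) <= K * u ^ 2) ->
  is_derive f 0 0.
Proof.
  intros H0 Hb. apply is_derive_Reals. intros eps Heps.
  assert (HK : 0 <= K).
  { specialize (Hb 1 ltac:(lra) ltac:(rewrite Rabs_R1; lra)).
    pose proof (Rabs_pos (f 1)). lra. }
  assert (Hd : 0 < Rmin 1 (eps / (K + 1))) by (apply Rmin_pos; [lra | apply Rdiv_lt_0_compat; lra]).
  exists (mkposreal _ Hd). intros h Hh0 Hh. simpl in Hh.
  pose proof (Rmin_l 1 (eps / (K + 1))). pose proof (Rmin_r 1 (eps / (K + 1))).
  specialize (Hb h Hh0 ltac:(lra)).
  rewrite Rplus_0_l, H0, Rminus_0_r, Rminus_0_r.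
  unfold Rdiv. rewrite Rabs_mult, Rabs_inv.
  assert (Hpos : 0 < Rabs h) by (apply Rabs_pos_lt; auto).
  apply Rle_lt_trans with (K * Rabs h).
  - apply Rmult_le_reg_r with (Rabs h); [exact Hpos |].
    rewrite Rmult_assoc, Rinv_l, Rmult_1_r by lra.
    assert (Rabs h * Rabs h = h ^ 2)
      by (rewrite <- Rabs_mult, Rabs_right; [ring | apply Rle_ge; nra]).
    nra.
  - apply Rle_lt_trans with ((K + 1) * Rabs h); [nra |].
    apply Rmult_lt_reg_r with (/ (K + 1)); [apply Rinv_0_lt_compat; lra |].
    replace ((K + 1) * Rabs h * / (K + 1)) with (Rabs h) by (field; lra). lra.
Qed.

Definition flat (n : nat) (u : R) : R := if Rlt_dec 0 u then flat_pos n u else 0.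

Lemma flat_nonpos n u : u <= 0 -> flat n u = 0.
Proof. intros Hu. unfold flat. destruct (Rlt_dec 0 u); [lra | reflexivity]. Qed.

Lemma is_derive_flat n (u : R) : is_derive (flat n) u (flat (S n) u).
Proof.
  destruct (Rtotal_order u 0) as [Hneg | [-> | Hpos]].
  - rewrite (flat_nonpos (S n)) by lra.
    apply is_derive_ext_loc with (fun _ => 0); [| apply (is_derive_const 0)].
    apply filter_imp with (fun t : R => t < 0); [| apply (open_lt 0 u Hneg)].
    intros t Ht. symmetry. apply flat_nonpos. lra.
  - rewrite (flat_nonpos (S n)) by lra.
    destruct (flat_pos_quadratic_bound n) as [K [HK0 HK]].
    apply (is_derive_zero_of_quadratic_bound _ K); [apply flat_nonpos; lra |].
    intros h Hh0 Hh1. unfold flat. destruct (Rlt_dec 0 h) as [Hp | Hnp].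
    + apply HK. apply Rabs_le_between in Hh1. lra.
    + rewrite Rabs_R0. apply Rmult_le_pos; [lra | apply pow2_ge_0].
  - unfold flat at 2. destruct (Rlt_dec 0 u) as [_ | C]; [| lra].
    apply is_derive_ext_loc with (flat_pos n); [| apply is_derive_flat_pos; lra].
    apply filter_imp with (fun t : R => 0 < t); [| apply (open_gt 0 u Hpos)].
    intros t Ht. unfold flat. destruct (Rlt_dec 0 t); [reflexivity | lra].
Qed.

(** * Towers of derivatives and the bump function *)

Definition deriv_tower (f : nat -> R -> R) : Prop :=
  forall n t, is_derive (f n) t (f (S n) t).

Lemma flat_tower : deriv_tower flat.
Proof. exact is_derive_flat. Qed.

Lemma tower_affine (f : nat -> R -> R) (a b : R) :
  deriv_tower f -> deriv_tower (fun n t => a ^ n * f n (a * t + b)).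
Proof.
  intros Hf n t. eapply is_derive_eq.
  - apply is_derive_scal, is_derive_affine_comp, Hf.
  - simpl. ring.
Qed.

Lemma tower_continuous (f : nat -> R -> R) n t : deriv_tower f -> continuous (f n) t.
Proof.
  intros Hf. apply (ex_derive_continuous (K := R_AbsRing) (V := R_NormedModule)).
  eexists. apply Hf.
Qed.

Lemma tower_parity (f : nat -> R -> R) :
  deriv_tower f -> (forall t, f 0%nat (- t) = f 0%nat t) ->
  forall n t, f n (- t) = (-1) ^ n * f n t.
Proof.
  intros Hf Heven n. induction n as [|n IH]; intros t.
  - simpl. rewrite Heven. ring.
  - assert (Dl : is_derive (fun s => f n (- s)) t (- f (S n) (- t))).
    { apply (is_derive_Rext (fun s => f n (-1 * s + 0))); [intros s; f_equal; ring |].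
      eapply is_derive_eq; [apply is_derive_affine_comp |].
      - replace (-1 * t + 0) with (- t) by ring. apply Hf.
      - ring. }
    assert (Dr : is_derive (fun s => f n (- s)) t ((-1) ^ n * f (S n) t)).
    { apply (is_derive_Rext (fun s => (-1) ^ n * f n s)); [intros s; symmetry; apply IH |].
      apply is_derive_scal, Hf. }
    apply is_derive_unique in Dl. apply is_derive_unique in Dr.
    rewrite Dr in Dl. simpl. lra.
Qed.

(* If [f (S n)] vanished identically, [f n] would be constant, hence zero since [f n a = 0]. *)
Lemma tower_not_identically_zero (f : nat -> R -> R) (a : R) :
  deriv_tower f -> (forall n, f n a = 0) -> (exists t, f 0%nat t <> 0) ->
  forall n, exists t, f n t <> 0.
Proof.
  intros Hf Ha Hnz n. induction n as [|n [t0 Ht0]]; [exact Hnz |].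
  apply NNPP. intros Hzero. apply Ht0.
  destruct (MVT_gen (f n) a t0 (f (S n))) as [c [_ Hc]].
  - intros x _. apply Hf.
  - intros x _. apply continuity_pt_filterlim, tower_continuous, Hf.
  - rewrite Ha in Hc. destruct (Req_dec (f (S n) c) 0) as [Hc0 | Hc0].
    + rewrite Hc0 in Hc. lra.
    + exfalso. apply Hzero. now exists c.
Qed.

Section Leibniz.

Variables f g : nat -> R -> R.

(* The n-th derivative of [f 0 * g 0] is the sum of [f i * g j] over the 2^n
   words of the unexpanded Leibniz rule, each word recorded by its pair (i, j). *)
Definition leibniz_step (p : nat * nat) : list (nat * nat) :=
  (S (fst p), snd p) :: (fst p, S (snd p)) :: nil.

Fixpoint leibniz_words (n : nat) : list (nat * nat) :=
  match n with
  | O => (0%nat, 0%nat) :: nil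
  | S n => flat_map leibniz_step (leibniz_words n)
  end.

Definition words_sum (w : list (nat * nat)) (t : R) : R :=
  fold_right (fun p acc => f (fst p) t * g (snd p) t + acc) 0 w.

Definition leibniz (n : nat) (t : R) : R := words_sum (leibniz_words n) t.

Lemma words_sum_app w1 w2 t : words_sum (w1 ++ w2) t = words_sum w1 t + words_sum w2 t.
Proof. induction w1 as [|p w1 IH]; simpl; [ring | unfold words_sum in *; rewrite IH; ring]. Qed.

Lemma leibniz_0 t : leibniz 0 t = f 0%nat t * g 0%nat t.
Proof. unfold leibniz, words_sum. simpl. ring. Qed.

Lemma leibniz_vanish t :
  (forall i, f i t = 0) \/ (forall j, g j t = 0) -> forall n, leibniz n t = 0.
Proof.
  intros Hz n. unfold leibniz. induction (leibniz_words n) as [|p w IH]; [reflexivity |].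
  unfold words_sum in *. simpl. rewrite IH.
  destruct Hz as [Hz | Hz]; rewrite Hz; ring.
Qed.

Hypothesis f_tower : deriv_tower f.
Hypothesis g_tower : deriv_tower g.

Lemma is_derive_words_sum w t :
  is_derive (words_sum w) t (words_sum (flat_map leibniz_step w) t).
Proof.
  induction w as [|p w IH].
  - apply (is_derive_const 0).
  - change (flat_map leibniz_step (p :: w)) with (leibniz_step p ++ flat_map leibniz_step w).
    rewrite words_sum_app. eapply is_derive_eq.
    + apply (is_derive_Rplus (fun t => f (fst p) t * g (snd p) t) (words_sum w)); [| exact IH].
      apply is_derive_Rmult; [apply f_tower | apply g_tower].
    + unfold words_sum. simpl. ring.
Qed.

Lemma leibniz_tower : deriv_tower leibniz.
Proof. intros n t. apply is_derive_words_sum. Qed.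

End Leibniz.

(* A smooth even function with support [[-r, r]]: [exp (-1/(r+t)) exp (-1/(r-t))]. *)
Definition bump (r : R) : nat -> R -> R :=
  leibniz (fun n t => 1 ^ n * flat n (1 * t + r)) (fun n t => (-1) ^ n * flat n (-1 * t + r)).

Lemma bump_tower r : deriv_tower (bump r).
Proof. apply leibniz_tower; apply tower_affine, flat_tower. Qed.

Lemma bump_support r n t : r <= Rabs t -> bump r n t = 0.
Proof.
  intros Ht. apply leibniz_vanish.
  destruct (Rle_dec 0 t).
  - right. intros j. rewrite Rabs_right in Ht by lra. rewrite flat_nonpos by lra. ring.
  - left. intros i. rewrite Rabs_left in Ht by lra. rewrite flat_nonpos by lra. ring.
Qed.

Lemma bump_parity r n t : bump r n (- t) = (-1) ^ n * bump r n t.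
Proof.
  apply tower_parity; [apply bump_tower |]. intros s. unfold bump. rewrite !leibniz_0.
  replace (1 * - s + r) with (-1 * s + r) by ring.
  replace (-1 * - s + r) with (1 * s + r) by ring. ring.
Qed.

Lemma bump_nonzero r n : 0 < r -> exists t, bump r n t <> 0.
Proof.
  intros Hr. apply (tower_not_identically_zero _ r); [apply bump_tower | |].
  - intros m. apply bump_support. rewrite Rabs_right; lra.
  - exists 0. unfold bump. rewrite leibniz_0, !Rmult_0_r, !Rplus_0_l. simpl.
    unfold flat. destruct (Rlt_dec 0 r) as [_ | C]; [| lra].
    unfold flat_pos. simpl. pose proof (exp_pos (- / r)). nra.
Qed.

(** * Separable monomials and the tensor template *)

Section Monomials.

Variable f : nat -> R -> R.

(* [Mono c i j k] centred at [s] is [c f_i(x_1 - s_1) f_j(x_2 - s_2) f_k(x_3 - s_3)]. *)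
Record mono := Mono { mcoef : R; mord0 : nat; mord1 : nat; mord2 : nat }.

Definition mord (q : nat) (m : mono) : nat :=
  match q with 0%nat => mord0 m | 1%nat => mord1 m | _ => mord2 m end.

Definition mono_eval (s : pt) (m : mono) (x : pt) : R :=
  mcoef m * f (mord0 m) (coord 0 x - coord 0 s) * f (mord1 m) (coord 1 x - coord 1 s)
  * f (mord2 m) (coord 2 x - coord 2 s).

Definition meval (s : pt) (L : list mono) (x : pt) : R := lsum (fun m => mono_eval s m x) L.

Definition mono_diff (q : nat) (m : mono) : mono :=
  match q with
  | 0%nat => Mono (mcoef m) (S (mord0 m)) (mord1 m) (mord2 m)
  | 1%nat => Mono (mcoef m) (mord0 m) (S (mord1 m)) (mord2 m)
  | _ => Mono (mcoef m) (mord0 m) (mord1 m) (S (mord2 m))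
  end.

Definition mdiff (q : nat) (L : list mono) : list mono := map (mono_diff q) L.

Fixpoint mdiffs (l : list nat) (L : list mono) : list mono :=
  match l with nil => L | q :: l => mdiff q (mdiffs l L) end.

Hypothesis f_tower : deriv_tower f.

Lemma is_derive_shift n (a v : R) : is_derive (fun u => f n (u - a)) v (f (S n) (v - a)).
Proof.
  apply (is_derive_Rext (fun u => f n (1 * u + - a))); [intros u; f_equal; ring |].
  eapply is_derive_eq; [apply is_derive_affine_comp |].
  - replace (1 * v + - a) with (v - a) by ring. apply f_tower.
  - ring.
Qed.

Lemma is_derive_mono_eval q s m (x : pt) :
  is_derive (fun u => mono_eval s m (upd q x u)) (coord q x) (mono_eval s (mono_diff q m) x).
Proof.
  destruct x as [[x0 x1] x2]. unfold mono_eval.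
  destruct q as [|[|q]]; simpl.
  - apply (is_derive_Rext (fun u => (mcoef m * f (mord1 m) (x1 - coord 1 s)
      * f (mord2 m) (x2 - coord 2 s)) * f (mord0 m) (u - coord 0 s))); [intros; simpl; ring |].
    eapply is_derive_eq; [apply is_derive_scal, is_derive_shift |]; simpl; ring.
  - apply (is_derive_Rext (fun u => (mcoef m * f (mord0 m) (x0 - coord 0 s)
      * f (mord2 m) (x2 - coord 2 s)) * f (mord1 m) (u - coord 1 s))); [intros; simpl; ring |].
    eapply is_derive_eq; [apply is_derive_scal, is_derive_shift |]; simpl; ring.
  - apply (is_derive_Rext (fun u => (mcoef m * f (mord0 m) (x0 - coord 0 s)
      * f (mord1 m) (x1 - coord 1 s)) * f (mord2 m) (u - coord 2 s))); [intros; simpl; ring |].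
    eapply is_derive_eq; [apply is_derive_scal, is_derive_shift |]; simpl; ring.
Qed.

Lemma is_derive_meval q s L (x : pt) :
  is_derive (fun u => meval s L (upd q x u)) (coord q x) (meval s (mdiff q L) x).
Proof.
  unfold meval, lsum; induction L as [|m L IH]; simpl.
  - apply (is_derive_const 0).
  - apply is_derive_Rplus; [apply is_derive_mono_eval | exact IH].
Qed.

Lemma continuous_coord q (x : pt) : continuous (coord q) x.
Proof.
  destruct q as [|[|q]]; simpl.
  - apply (continuous_comp fst fst), continuous_fst. apply continuous_fst.
  - apply (continuous_comp fst snd), continuous_snd. apply continuous_fst.
  - apply continuous_snd.
Qed.

Lemma continuous_meval s L (x : pt) : continuous (meval s L) x.
Proof.
  assert (Hshift : forall n q, continuous (fun y : pt => f n (coord q y - coord q s)) x).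
  { intros n q. apply (continuous_comp (fun y : pt => coord q y - coord q s) (f n)).
    - apply (continuous_minus (coord q) (fun _ => coord q s));
        [apply continuous_coord | apply continuous_const].
    - apply tower_continuous, f_tower. }
  unfold meval, lsum; induction L as [|m L IH]; simpl.
  - apply continuous_const.
  - apply continuous_Rplus; [| exact IH]. unfold mono_eval.
    repeat apply continuous_Rmult; auto. apply continuous_const.
Qed.

End Monomials.

(* Read [Mono c i j k] as [c d1^i d2^j d3^k phi] with [phi(x) = f0(x1) f0(x2) f0(x3)];
   the identities below then hold for every [phi] because partial derivatives commute. *)
Definition template (i j : nat) : list mono :=
  match i, j with
  | 0%nat, 0%nat => Mono 2 1 3 0 :: nil
  | 1%nat, 1%nat => Mono 2 3 1 0 :: nil
  | 2%nat, 2%nat => Mono (-2) 3 1 0 :: Mono (-2) 1 3 0 :: nil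
  | 0%nat, 1%nat | 1%nat, 0%nat => Mono (-2) 2 2 0 :: Mono (-1) 2 0 2 :: Mono (-1) 0 2 2 :: nil
  | 0%nat, 2%nat | 2%nat, 0%nat => Mono 1 2 1 1 :: Mono 1 0 3 1 :: nil
  | 1%nat, 2%nat | 2%nat, 1%nat => Mono 1 3 0 1 :: Mono 1 1 2 1 :: nil
  | _, _ => nil
  end.

Lemma template_sym i j : template i j = template j i.
Proof. destruct i as [|[|[|i]]]; destruct j as [|[|[|j]]]; reflexivity. Qed.

Lemma template_trace f s x : sum3 (fun i => meval f s (template i i) x) = 0.
Proof. unfold sum3, meval, lsum, mono_eval. simpl. ring. Qed.

Lemma template_div f s x i : (i < 3)%nat ->
  sum3 (fun j => meval f s (mdiff j (template i j)) x) = 0.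
Proof.
  intros Hi. unfold sum3.
  destruct i as [|[|[|i]]]; try lia; unfold meval, lsum, mono_eval; simpl; ring.
Qed.

Lemma template_L f s x :
  sum3 (fun i => sum3 (fun j => meval f s (mdiff j (mdiff i (template i j))) x
                               - meval f s (mdiff j (mdiff j (template i i))) x)) = 0.
Proof. unfold sum3, meval, lsum, mono_eval. simpl. ring. Qed.

(** * Six translated copies of the template *)

Definition sum6 (F : nat -> R) : R := F 0%nat + F 1%nat + F 2%nat + F 3%nat + F 4%nat + F 5%nat.

Lemma sum6_zero (F : nat -> R) : (forall k, (k < 6)%nat -> F k = 0) -> sum6 F = 0.
Proof. intros HF. unfold sum6. rewrite !HF by lia. ring. Qed.

Definition axis (k : nat) : nat :=
  match k with 0%nat | 3%nat => 0%nat | 1%nat | 4%nat => 1%nat | _ => 2%nat end.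

Definition sgn (k : nat) : R := match k with 0%nat | 1%nat | 2%nat => 1 | _ => -1 end.

Definition centre (k : nat) : pt := upd (axis k) (0, 0, 0) (sgn k * (3 / 2)).

Section Copiess.

Variable f : nat -> R -> R.

Definition copies (c : nat -> R) (L : list mono) (x : pt) : R :=
  sum6 (fun k => c k * meval f (centre k) L x).

Hypothesis f_tower : deriv_tower f.

Lemma is_derive_copies c q L (x : pt) :
  is_derive (fun u => copies c L (upd q x u)) (coord q x) (copies c (mdiff q L) x).
Proof.
  unfold copies, sum6. repeat apply is_derive_Rplus;
    apply is_derive_scal with (f := fun u => meval f _ L (upd q x u)), is_derive_meval, f_tower.
Qed.

Lemma partial_copies c q L : partial q (copies c L) = copies c (mdiff q L).
Proof.
  apply functional_extensionality. intros x. apply is_derive_unique, is_derive_copies.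
Qed.

Lemma copies_smooth c L : smooth (copies c L).
Proof.
  intros l _.
  replace (dpart l (copies c L)) with (copies c (mdiffs l L))
    by (induction l as [|q l IH]; simpl; [reflexivity | now rewrite <- IH, partial_copies]).
  split.
  - intros x. unfold copies, sum6.
    repeat apply continuous_Rplus;
      apply continuous_Rmult; try apply continuous_const; apply continuous_meval, f_tower.
  - intros q _ x. eexists. apply is_derive_copies.
Qed.

End Copiess.

Definition copies_tensor (f : nat -> R -> R) (c : nat -> R) : tensor :=
  fun i j => copies f c (template i j).

Section CopiesTensor.

Variable f : nat -> R -> R.
Hypothesis f_tower : deriv_tower f.
Variable c : nat -> R.

Lemma copies_tensor_smooth : tensor_smooth (copies_tensor f c).
Proof. intros i j _ _. now apply copies_smooth. Qed.

Lemma copies_tensor_symmetric : symmetric (copies_tensor f c).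
Proof. intros i j _ _ x. unfold copies_tensor. now rewrite template_sym. Qed.

Lemma copies_tensor_trace_free : trace_free (copies_tensor f c).
Proof.
  intros x. transitivity (sum6 (fun k => c k * sum3 (fun i => meval f (centre k) (template i i) x))).
  - unfold copies_tensor, copies, sum6, sum3. ring.
  - apply sum6_zero. intros k _. rewrite template_trace. ring.
Qed.

Lemma copies_tensor_div_free : div_free (copies_tensor f c).
Proof.
  intros i Hi x. unfold copies_tensor, sum3. rewrite !partial_copies by exact f_tower.
  transitivity (sum6 (fun k => c k * sum3 (fun j => meval f (centre k) (mdiff j (template i j)) x))).
  - unfold copies, sum6, sum3. ring.
  - apply sum6_zero. intros k _. rewrite template_div by exact Hi. ring.
Qed.

Lemma copies_tensor_L x : Lop (copies_tensor f c) x = 0.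
Proof.
  unfold Lop, copies_tensor, sum3. rewrite !partial_copies by exact f_tower.
  transitivity (sum6 (fun k => c k * sum3 (fun i => sum3 (fun j =>
    meval f (centre k) (mdiff j (mdiff i (template i j))) x
    - meval f (centre k) (mdiff j (mdiff j (template i i))) x)))).
  - unfold copies, sum6, sum3. ring.
  - apply sum6_zero. intros k _. rewrite template_L. ring.
Qed.

End CopiesTensor.

Definition rad : R := 1 / 5.

Definition in_cube (s x : pt) : Prop :=
  forall q, (q < 3)%nat -> Rabs (coord q x - coord q s) < rad.

Lemma mono_eval_outside s m x : ~ in_cube s x -> mono_eval (bump rad) s m x = 0.
Proof.
  intros Hout. unfold mono_eval.
  destruct (Rle_dec rad (Rabs (coord 0 x - coord 0 s))) as [H0 | H0];
    [rewrite (bump_support _ _ _ H0); ring |].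
  destruct (Rle_dec rad (Rabs (coord 1 x - coord 1 s))) as [H1 | H1];
    [rewrite (bump_support _ _ _ H1); ring |].
  destruct (Rle_dec rad (Rabs (coord 2 x - coord 2 s))) as [H2 | H2];
    [rewrite (bump_support _ _ _ H2); ring |].
  exfalso. apply Hout. intros q Hq. destruct q as [|[|[|q]]]; try lia; lra.
Qed.

Lemma meval_outside s L x : ~ in_cube s x -> meval (bump rad) s L x = 0.
Proof.
  intros Hout. unfold meval, lsum. induction L as [|m L IH]; simpl; [reflexivity |].
  rewrite mono_eval_outside, IH by exact Hout. ring.
Qed.

Definition sqnorm (x : pt) : R := coord 0 x ^ 2 + coord 1 x ^ 2 + coord 2 x ^ 2.

Definition shell (x : pt) : Prop := (6 / 5) ^ 2 <= sqnorm x <= (19 / 10) ^ 2.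

Lemma cube_in_shell k x : (k < 6)%nat -> in_cube (centre k) x -> shell x.
Proof.
  intros Hk Hx. unfold shell, sqnorm.
  pose proof (Hx 0%nat ltac:(lia)) as H0. pose proof (Hx 1%nat ltac:(lia)) as H1.
  pose proof (Hx 2%nat ltac:(lia)) as H2.
  apply Rabs_def2 in H0, H1, H2. unfold rad in *.
  destruct x as [[x0 x1] x2].
  destruct k as [|[|[|[|[|[|k]]]]]]; try lia; simpl in *; split; nra.
Qed.

Lemma continuous_sqnorm x : continuous sqnorm x.
Proof.
  unfold sqnorm. repeat apply continuous_Rplus;
    apply (continuous_comp (coord _) (fun u => u ^ 2)); try apply continuous_coord;
    apply (ex_derive_continuous (fun u => u ^ 2)); auto_derive; auto.
Qed.

Lemma shell_closed : closed shell.
Proof.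
  apply (closed_comp sqnorm (fun u => (6 / 5) ^ 2 <= u /\ u <= (19 / 10) ^ 2)).
  - exact continuous_sqnorm.
  - apply closed_and; [apply closed_ge | apply closed_le].
Qed.

Lemma shell_annulus x : shell x -> annulus1 x.
Proof.
  unfold shell, annulus1, enorm. fold (sqnorm x). intros [Hlo Hhi]. split.
  - rewrite <- sqrt_1. apply sqrt_lt_1; lra.
  - rewrite <- (sqrt_pow2 2) by lra. apply sqrt_lt_1; lra.
Qed.

Lemma copies_support c L : compact_support_in annulus1 (copies (bump rad) c L).
Proof.
  exists shell. split; [exact shell_closed |]. split; [| split].
  - exists 2. intros x Hx. apply shell_annulus in Hx. unfold annulus1 in Hx. lra.
  - exact shell_annulus.
  - intros x Hx. apply sum6_zero. intros k Hk.
    rewrite meval_outside; [ring |]. intros Hc. apply Hx. now apply (cube_in_shell k).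
Qed.

Lemma cubes_disjoint k k' x : (k < 6)%nat -> (k' < 6)%nat ->
  in_cube (centre k) x -> in_cube (centre k') x -> k = k'.
Proof.
  intros Hk Hk' Hx Hx'.
  pose proof (Hx 0%nat ltac:(lia)) as H0. pose proof (Hx 1%nat ltac:(lia)) as H1.
  pose proof (Hx 2%nat ltac:(lia)) as H2. pose proof (Hx' 0%nat ltac:(lia)) as H0'.
  pose proof (Hx' 1%nat ltac:(lia)) as H1'. pose proof (Hx' 2%nat ltac:(lia)) as H2'.
  apply Rabs_def2 in H0, H1, H2, H0', H1', H2'. unfold rad in *.
  destruct k as [|[|[|[|[|[|k]]]]]]; try lia; destruct k' as [|[|[|[|[|[|k']]]]]]; try lia;
    simpl in *; lra.
Qed.

Lemma sum6_single (F : nat -> R) k0 :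
  (k0 < 6)%nat -> (forall k, (k < 6)%nat -> k <> k0 -> F k = 0) -> sum6 F = F k0.
Proof.
  intros Hk0 HF.
  assert (Z : forall k, (k < 6)%nat -> F k = if Nat.eqb k k0 then F k0 else 0).
  { intros k Hk. destruct (Nat.eqb_spec k k0); [now subst | now apply HF]. }
  unfold sum6. rewrite (Z 0%nat), (Z 1%nat), (Z 2%nat), (Z 3%nat), (Z 4%nat), (Z 5%nat) by lia.
  destruct k0 as [|[|[|[|[|[|k0]]]]]]; try lia; simpl; ring.
Qed.

Lemma single_cube x :
  exists k0, (k0 < 6)%nat /\ forall k, (k < 6)%nat -> k <> k0 -> ~ in_cube (centre k) x.
Proof.
  destruct (classic (exists k, (k < 6)%nat /\ in_cube (centre k) x)) as [[k0 [Hk0 Hin]] | Hnone].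
  - exists k0. split; [exact Hk0 |]. intros k Hk Hne Hk_in.
    apply Hne. now apply (cubes_disjoint k k0 x).
  - exists 0%nat. split; [lia |]. intros k Hk _ Hk_in. apply Hnone. now exists k.
Qed.

Definition cube_energy (k : nat) (x : pt) : R :=
  sum3 (fun i => sum3 (fun j => sum3 (fun q =>
    meval (bump rad) (centre k) (mdiff q (template i j)) x ^ 2))).

Lemma grad_sq_copies_tensor c x :
  grad_sq (copies_tensor (bump rad) c) x = sum6 (fun k => c k ^ 2 * cube_energy k x).
Proof.
  destruct (single_cube x) as [k0 [Hk0 Hout]].
  assert (Hcopies : forall L, copies (bump rad) c L x = c k0 * meval (bump rad) (centre k0) L x).
  { intros L. unfold copies. apply (sum6_single (fun k => c k * _)); [exact Hk0 |]. intros k Hk Hne.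
    rewrite meval_outside by (now apply Hout). ring. }
  rewrite (sum6_single _ k0 Hk0).
  - unfold grad_sq, copies_tensor, cube_energy, sum3.
    rewrite !partial_copies by apply bump_tower. rewrite !Hcopies. ring.
  - intros k Hk Hne. unfold cube_energy, sum3.
    rewrite !(fun L => meval_outside (centre k) L x (Hout k Hk Hne)). ring.
Qed.

(** * Iterated integrals over the cube [[-2, 2]^3] *)

Lemma ex_RInt_Rcontinuous (f : R -> R) (a b : R) : (forall u, continuous f u) -> ex_RInt f a b.
Proof. intros Hf. apply (ex_RInt_continuous (V := R_CompleteNormedModule)). auto. Qed.

Lemma RInt_Ropp (f : R -> R) (a b : R) :
  ex_RInt f a b -> RInt (fun u => - f u) a b = - RInt f a b.
Proof. apply (RInt_opp (V := R_CompleteNormedModule)). Qed.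

Lemma RInt_zero (f : R -> R) (a b : R) : (forall u, f u = 0) -> RInt f a b = 0.
Proof.
  intros Hf. rewrite (RInt_ext f (fun _ => 0)) by auto.
  rewrite RInt_const. apply Rmult_0_r.
Qed.

Lemma RInt_odd (f : R -> R) (a : R) :
  ex_RInt f (- a) a -> (forall t, f (- t) = - f t) -> RInt f (- a) a = 0.
Proof.
  intros Hex Hodd. set (l := RInt f (- a) a).
  assert (Hl : is_RInt f (- a) (- - a) l) by (rewrite Ropp_involutive; exact (RInt_correct _ _ _ Hex)).
  apply (is_RInt_comp_opp f) in Hl.
  apply (is_RInt_ext _ f) in Hl; [| intros t _; simpl; unfold opp; simpl; rewrite Hodd; ring].
  apply (is_RInt_swap f) in Hl.
  pose proof (is_RInt_unique (V := R_CompleteNormedModule) _ _ _ _ Hl) as Hu.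
  fold l in Hu. unfold opp in Hu. simpl in Hu. lra.
Qed.

Lemma RInt_pos (f : R -> R) (a b u0 : R) :
  (forall u, continuous f u) -> (forall u, 0 <= f u) -> a < u0 < b -> 0 < f u0 ->
  0 < RInt f a b.
Proof.
  intros Hc Hnn Hu Hf.
  destruct (proj2 (continuity_pt_filterlim f u0) (Hc u0) (f u0 / 2)) as [alp [Halp Hnear]];
    [lra |].
  set (d := Rmin alp (Rmin (u0 - a) (b - u0))).
  assert (Hd : 0 < d) by (repeat apply Rmin_pos; lra).
  assert (Hda : d <= alp) by apply Rmin_l.
  assert (Hdab : d <= Rmin (u0 - a) (b - u0)) by apply Rmin_r.
  pose proof (Rmin_l (u0 - a) (b - u0)). pose proof (Rmin_r (u0 - a) (b - u0)).
  assert (Hex : forall c d, ex_RInt f c d) by (intros; now apply ex_RInt_Rcontinuous).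
  rewrite <- (RInt_Chasles (V := R_CompleteNormedModule) f a (u0 - d) b) by apply Hex.
  rewrite <- (RInt_Chasles (V := R_CompleteNormedModule) f (u0 - d) (u0 + d) b) by apply Hex.
  assert (Hleft : 0 <= RInt f a (u0 - d)) by (apply RInt_ge_0; auto; lra).
  assert (Hright : 0 <= RInt f (u0 + d) b) by (apply RInt_ge_0; auto; lra).
  assert (Hmid : RInt (fun _ => f u0 / 2) (u0 - d) (u0 + d) <= RInt f (u0 - d) (u0 + d)).
  { apply RInt_le; [lra | apply ex_RInt_Rcontinuous; intros; apply continuous_const | auto |].
    intros x Hx. destruct (Req_dec x u0) as [-> | Hne]; [lra |].
    assert (Hdist : R_dist (f x) (f u0) < f u0 / 2).
    { apply Hnear. split; [split; [exact I | auto] | unfold R_dist; apply Rabs_def1; lra]. }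
    unfold R_dist in Hdist. apply Rabs_def2 in Hdist. lra. }
  rewrite RInt_const in Hmid. unfold scal in Hmid. simpl in Hmid. unfold mult in Hmid. simpl in Hmid.
  assert (0 < (u0 + d - (u0 - d)) * (f u0 / 2)) by (apply Rmult_lt_0_compat; lra).
  unfold plus. simpl. lra.
Qed.

Definition cube_integrable (f : pt -> R) : Prop :=
  (forall a b, ex_RInt (fun c => f (a, b, c)) (-2) 2) /\
  (forall a, ex_RInt (fun b => RInt (fun c => f (a, b, c)) (-2) 2) (-2) 2) /\
  ex_RInt (fun a => RInt (fun b => RInt (fun c => f (a, b, c)) (-2) 2) (-2) 2) (-2) 2.

Lemma int_cube_nonneg (f : pt -> R) :
  cube_integrable f -> (forall x, 0 <= f x) -> 0 <= int_cube f.
Proof.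
  intros [Hex3 [Hex2 Hex1]] Hf. unfold int_cube.
  apply RInt_ge_0; [lra | exact Hex1 |]. intros a _.
  apply RInt_ge_0; [lra | apply Hex2 |]. intros b _.
  apply RInt_ge_0; [lra | apply Hex3 |]. intros c _. apply Hf.
Qed.

Definition refl (q : nat) (x : pt) : pt := upd q x (- coord q x).

(* Integrate out the reflected variable first: that partial integral is odd, hence zero. *)
Lemma int_cube_odd (f : pt -> R) (q : nat) :
  cube_integrable f -> (forall x, f (refl q x) = - f x) -> int_cube f = 0.
Proof.
  intros [Hex3 [Hex2 Hex1]] Hodd. unfold int_cube.
  destruct q as [|[|q]].
  - apply (RInt_odd _ 2); [exact Hex1 |]. intros a.
    rewrite <- RInt_Ropp by apply Hex2. apply RInt_ext. intros b _.
    rewrite <- RInt_Ropp by apply Hex3. apply RInt_ext. intros c _. apply (Hodd (a, b, c)).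
  - apply RInt_zero. intros a. apply (RInt_odd _ 2); [apply Hex2 |]. intros b.
    rewrite <- RInt_Ropp by apply Hex3. apply RInt_ext. intros c _. apply (Hodd (a, b, c)).
  - apply RInt_zero. intros a. apply RInt_zero. intros b.
    apply (RInt_odd _ 2); [apply Hex3 |]. intros c. apply (Hodd (a, b, c)).
Qed.

Lemma is_RInt_Rscal (f : R -> R) (a b k : R) :
  (forall u, continuous f u) -> is_RInt (fun u => k * f u) a b (k * RInt f a b).
Proof.
  intros Hf. apply (is_RInt_scal (V := R_NormedModule) f a b k).
  apply (RInt_correct (V := R_CompleteNormedModule)), ex_RInt_Rcontinuous, Hf.
Qed.

Lemma is_RInt_eq (f : R -> R) (a b l l' : R) : is_RInt f a b l -> l = l' -> is_RInt f a b l'.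
Proof. now intros H <-. Qed.

Lemma is_RInt_lsum {A : Type} (g : A -> R -> R) (h : A -> R) (L : list A) (a b : R) :
  (forall t, In t L -> is_RInt (g t) a b (h t)) ->
  is_RInt (fun u => lsum (fun t => g t u) L) a b (lsum h L).
Proof.
  induction L as [|t L IH]; intros Hg; simpl.
  - eapply is_RInt_eq; [apply (is_RInt_const (V := R_NormedModule)) |].
    unfold scal. simpl. unfold mult. simpl. ring.
  - apply (is_RInt_plus (V := R_NormedModule)); [apply Hg; now left |].
    apply IH. intros t' Ht'. apply Hg. now right.
Qed.

Record sep := Sep { scoef : R; sfun0 : R -> R; sfun1 : R -> R; sfun2 : R -> R }.

Definition sep_eval (t : sep) (x : pt) : R :=
  scoef t * sfun0 t (coord 0 x) * sfun1 t (coord 1 x) * sfun2 t (coord 2 x).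

Definition sep_continuous (t : sep) : Prop :=
  forall u, continuous (sfun0 t) u /\ continuous (sfun1 t) u /\ continuous (sfun2 t) u.

Definition sep_integral (t : sep) : R :=
  scoef t * RInt (sfun0 t) (-2) 2 * RInt (sfun1 t) (-2) 2 * RInt (sfun2 t) (-2) 2.

Definition separable (f : pt -> R) : Prop :=
  exists L, (forall t, In t L -> sep_continuous t) /\ forall x, f x = lsum (fun t => sep_eval t x) L.

Section SepList.

Variable L : list sep.
Hypothesis L_continuous : forall t, In t L -> sep_continuous t.

Lemma is_RInt_sep_level3 a b :
  is_RInt (fun c => lsum (fun t => sep_eval t (a, b, c)) L) (-2) 2
    (lsum (fun t => scoef t * sfun0 t a * sfun1 t b * RInt (sfun2 t) (-2) 2) L).
Proof.
  apply is_RInt_lsum. intros t Ht. apply is_RInt_Rscal. apply L_continuous, Ht.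
Qed.

Lemma is_RInt_sep_level2 a :
  is_RInt (fun b => RInt (fun c => lsum (fun t => sep_eval t (a, b, c)) L) (-2) 2) (-2) 2
    (lsum (fun t => scoef t * sfun0 t a * RInt (sfun1 t) (-2) 2 * RInt (sfun2 t) (-2) 2) L).
Proof.
  eapply is_RInt_ext; [intros b _; symmetry; apply is_RInt_unique, is_RInt_sep_level3 |].
  apply is_RInt_lsum. intros t Ht.
  apply (is_RInt_ext (fun b => (scoef t * sfun0 t a * RInt (sfun2 t) (-2) 2) * sfun1 t b));
    [intros; simpl; ring |].
  eapply is_RInt_eq; [apply is_RInt_Rscal, L_continuous, Ht | ring].
Qed.

Lemma is_RInt_sep_level1 :
  is_RInt (fun a => RInt (fun b => RInt (fun c => lsum (fun t => sep_eval t (a, b, c)) L)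
                                        (-2) 2) (-2) 2) (-2) 2
    (lsum sep_integral L).
Proof.
  eapply is_RInt_ext; [intros a _; symmetry; apply is_RInt_unique, is_RInt_sep_level2 |].
  apply is_RInt_lsum. intros t Ht.
  apply (is_RInt_ext (fun a => (scoef t * RInt (sfun1 t) (-2) 2 * RInt (sfun2 t) (-2) 2)
                               * sfun0 t a)); [intros; simpl; ring |].
  eapply is_RInt_eq; [apply is_RInt_Rscal, L_continuous, Ht | unfold sep_integral; ring].
Qed.

Lemma int_cube_sep_list : int_cube (fun x => lsum (fun t => sep_eval t x) L) = lsum sep_integral L.
Proof. apply is_RInt_unique, is_RInt_sep_level1. Qed.

Lemma sep_list_cube_integrable : cube_integrable (fun x => lsum (fun t => sep_eval t x) L).
Proof.
  split; [| split]; [intros a b | intros a |]; eexists;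
    [apply is_RInt_sep_level3 | apply is_RInt_sep_level2 | apply is_RInt_sep_level1].
Qed.

End SepList.

Lemma separable_repr (f : pt -> R) :
  separable f -> exists L, (forall t, In t L -> sep_continuous t) /\
                           f = (fun x => lsum (fun t => sep_eval t x) L).
Proof.
  intros [L [HL Hf]]. exists L. split; [exact HL |]. now apply functional_extensionality.
Qed.

Lemma separable_cube_integrable (f : pt -> R) : separable f -> cube_integrable f.
Proof. intros Hf. destruct (separable_repr f Hf) as [L [HL ->]]. now apply sep_list_cube_integrable. Qed.

Lemma int_cube_plus (f g : pt -> R) :
  separable f -> separable g -> int_cube (fun x => f x + g x) = int_cube f + int_cube g.
Proof.
  intros Hf Hg.
  destruct (separable_repr f Hf) as [L1 [HL1 ->]]. destruct (separable_repr g Hg) as [L2 [HL2 ->]].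
  assert (HL : forall t, In t (L1 ++ L2) -> sep_continuous t)
    by (intros t Ht; apply in_app_or in Ht; destruct Ht; auto).
  rewrite !int_cube_sep_list by assumption. rewrite <- lsum_app, <- (int_cube_sep_list _ HL).
  f_equal. apply functional_extensionality. intros x. now rewrite lsum_app.
Qed.

Definition sep_scale (a : R) (t : sep) : sep := Sep (a * scoef t) (sfun0 t) (sfun1 t) (sfun2 t).

Lemma lsum_sep_scale (g : sep -> R) (a : R) (L : list sep) :
  (forall t, g (sep_scale a t) = a * g t) -> lsum g (map (sep_scale a) L) = a * lsum g L.
Proof. intros Hg. induction L as [|t L IH]; simpl; [ring | unfold lsum in *; rewrite Hg, IH; ring]. Qed.

Lemma int_cube_scal (f : pt -> R) (a : R) :
  separable f -> int_cube (fun x => a * f x) = a * int_cube f.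
Proof.
  intros Hf. destruct (separable_repr f Hf) as [L [HL ->]].
  assert (HLa : forall t, In t (map (sep_scale a) L) -> sep_continuous t)
    by (intros t Ht; apply in_map_iff in Ht; destruct Ht as [t' [<- Ht']]; exact (HL t' Ht')).
  rewrite (int_cube_sep_list _ HL), <- (lsum_sep_scale sep_integral) by (intros; unfold sep_integral; simpl; ring).
  rewrite <- (int_cube_sep_list _ HLa). f_equal. apply functional_extensionality. intros x.
  symmetry. apply lsum_sep_scale. intros t. unfold sep_eval. simpl. ring.
Qed.

Lemma separable_sep_eval (t : sep) : sep_continuous t -> separable (sep_eval t).
Proof.
  intros Ht. exists (t :: nil). split; [intros t' [<- | []]; exact Ht |].
  intros x. simpl. ring.
Qed.

Lemma separable_plus (f g : pt -> R) :
  separable f -> separable g -> separable (fun x => f x + g x).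
Proof.
  intros [L1 [HL1 Hf]] [L2 [HL2 Hg]]. exists (L1 ++ L2). split.
  - intros t Ht. apply in_app_or in Ht. destruct Ht; auto.
  - intros x. now rewrite lsum_app, Hf, Hg.
Qed.

Definition sep_mul (t1 t2 : sep) : sep :=
  Sep (scoef t1 * scoef t2) (fun u => sfun0 t1 u * sfun0 t2 u)
      (fun u => sfun1 t1 u * sfun1 t2 u) (fun u => sfun2 t1 u * sfun2 t2 u).

Lemma lsum_map_sep_mul (t1 : sep) (L2 : list sep) (x : pt) :
  lsum (fun t => sep_eval t x) (map (sep_mul t1) L2)
  = sep_eval t1 x * lsum (fun t => sep_eval t x) L2.
Proof.
  induction L2 as [|t2 L2 IH]; unfold lsum in *; simpl; [ring |].
  rewrite IH. unfold sep_eval. simpl. ring.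
Qed.

Lemma lsum_sep_mul (L1 L2 : list sep) (x : pt) :
  lsum (fun t => sep_eval t x) (flat_map (fun t1 => map (sep_mul t1) L2) L1)
  = lsum (fun t => sep_eval t x) L1 * lsum (fun t => sep_eval t x) L2.
Proof.
  induction L1 as [|t1 L1 IH]; simpl; [unfold lsum; simpl; ring |].
  rewrite lsum_app, IH, lsum_map_sep_mul. unfold lsum. simpl. ring.
Qed.

Lemma separable_mult (f g : pt -> R) :
  separable f -> separable g -> separable (fun x => f x * g x).
Proof.
  intros [L1 [HL1 Hf]] [L2 [HL2 Hg]].
  exists (flat_map (fun t1 => map (sep_mul t1) L2) L1). split.
  - intros t Ht. apply in_flat_map in Ht. destruct Ht as [t1 [Ht1 Ht]].
    apply in_map_iff in Ht. destruct Ht as [t2 [<- Ht2]].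
    intros u. destruct (HL1 t1 Ht1 u) as [A0 [A1 A2]]. destruct (HL2 t2 Ht2 u) as [B0 [B1 B2]].
    repeat split; simpl; apply continuous_Rmult; assumption.
  - intros x. now rewrite lsum_sep_mul, Hf, Hg.
Qed.

Lemma separable_ext (f g : pt -> R) : (forall x, f x = g x) -> separable f -> separable g.
Proof. intros Hfg [L [HL Hf]]. exists L. split; [exact HL |]. intros x. now rewrite <- Hfg. Qed.

Lemma separable_scal (a : R) (f : pt -> R) : separable f -> separable (fun x => a * f x).
Proof.
  intros Hf. apply (separable_ext (fun x => sep_eval (Sep a (fun _ => 1) (fun _ => 1) (fun _ => 1)) x * f x)).
  - intros x. unfold sep_eval. simpl. ring.
  - apply separable_mult; [| exact Hf].
    apply separable_sep_eval. intros u. repeat split; apply continuous_const.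
Qed.

Lemma int_cube_ext (f g : pt -> R) : (forall x, f x = g x) -> int_cube f = int_cube g.
Proof. intros Hfg. f_equal. now apply functional_extensionality. Qed.

Lemma int_cube_sep_eval (t : sep) : sep_continuous t -> int_cube (sep_eval t) = sep_integral t.
Proof.
  intros Ht. rewrite (int_cube_ext _ (fun x => lsum (fun t' => sep_eval t' x) (t :: nil)))
    by (intros x; unfold lsum; simpl; ring).
  rewrite int_cube_sep_list by (intros t' [<- | []]; exact Ht). unfold lsum. simpl. ring.
Qed.

(** * Moments of the energy density *)

Definition mono_sep (f : nat -> R -> R) (s : pt) (m : mono) : sep :=
  Sep (mcoef m) (fun u => f (mord0 m) (u - coord 0 s)) (fun u => f (mord1 m) (u - coord 1 s))
      (fun u => f (mord2 m) (u - coord 2 s)).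

Lemma mono_sep_continuous f s m : deriv_tower f -> sep_continuous (mono_sep f s m).
Proof.
  intros Hf u. repeat split; apply (ex_derive_continuous (K := R_AbsRing) (V := R_NormedModule));
    eexists; apply is_derive_shift, Hf.
Qed.

Lemma separable_meval f s L : deriv_tower f -> separable (meval f s L).
Proof.
  intros Hf. exists (map (mono_sep f s) L). split.
  - intros t Ht. apply in_map_iff in Ht. destruct Ht as [m [<- _]]. now apply mono_sep_continuous.
  - intros x. unfold meval. now rewrite lsum_map.
Qed.

Definition coord_sep (p : nat) : sep :=
  match p with
  | 0%nat => Sep 1 (fun u => u) (fun _ => 1) (fun _ => 1)
  | 1%nat => Sep 1 (fun _ => 1) (fun u => u) (fun _ => 1)
  | _ => Sep 1 (fun _ => 1) (fun _ => 1) (fun u => u)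
  end.

Lemma separable_coord p : separable (coord p).
Proof.
  apply (separable_ext (sep_eval (coord_sep p))).
  - intros x. destruct p as [|[|p]]; unfold sep_eval; simpl; ring.
  - apply separable_sep_eval. intros u.
    destruct p as [|[|p]]; repeat split; simpl; apply continuous_id || apply continuous_const.
Qed.

Lemma separable_sum3 (F : nat -> pt -> R) :
  (forall i, separable (F i)) -> separable (fun x => sum3 (fun i => F i x)).
Proof. intros HF. unfold sum3. repeat apply separable_plus; apply HF. Qed.

Lemma separable_cube_energy k : separable (cube_energy k).
Proof.
  unfold cube_energy. apply separable_sum3; intros i. apply separable_sum3; intros j.
  apply separable_sum3; intros q.
  apply (separable_ext (fun x => meval (bump rad) (centre k) (mdiff q (template i j)) x
                                 * meval (bump rad) (centre k) (mdiff q (template i j)) x));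
    [intros; ring |].
  apply separable_mult; apply separable_meval, bump_tower.
Qed.

Definition moment (p k : nat) : R := int_cube (fun x => coord p x * cube_energy k x).

Lemma separable_moment_density p k : separable (fun x => coord p x * cube_energy k x).
Proof. apply separable_mult; [apply separable_coord | apply separable_cube_energy]. Qed.

Lemma int_cube_sum6 (F : nat -> pt -> R) :
  (forall k, separable (F k)) ->
  int_cube (fun x => sum6 (fun k => F k x)) = sum6 (fun k => int_cube (F k)).
Proof.
  intros HF. unfold sum6.
  rewrite (int_cube_plus (fun x => F 0%nat x + F 1%nat x + F 2%nat x + F 3%nat x + F 4%nat x)),
    (int_cube_plus (fun x => F 0%nat x + F 1%nat x + F 2%nat x + F 3%nat x)),
    (int_cube_plus (fun x => F 0%nat x + F 1%nat x + F 2%nat x)),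
    (int_cube_plus (fun x => F 0%nat x + F 1%nat x)), int_cube_plus;
    repeat apply separable_plus; auto.
Qed.

Lemma int_cube_weighted_energy c p :
  int_cube (fun x => coord p x * grad_sq (copies_tensor (bump rad) c) x)
  = sum6 (fun k => c k ^ 2 * moment p k).
Proof.
  rewrite (int_cube_ext _ (fun x => sum6 (fun k => c k ^ 2 * (coord p x * cube_energy k x))))
    by (intros x; rewrite grad_sq_copies_tensor; unfold sum6; ring).
  rewrite int_cube_sum6 by (intros k; apply separable_scal, separable_moment_density).
  unfold sum6, moment. rewrite !int_cube_scal by apply separable_moment_density. reflexivity.
Qed.

Lemma coord_refl q x : coord q (refl q x) = - coord q x.
Proof. destruct x as [[x0 x1] x2]. now destruct q as [|[|q]]. Qed.

Lemma template_parity i j m q :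
  exists e, e ^ 2 = 1 /\ forall mo, In mo (mdiff m (template i j)) -> (-1) ^ mord q mo = e.
Proof.
  destruct i as [|[|[|i]]]; destruct j as [|[|[|j]]]; destruct m as [|[|m]]; destruct q as [|[|q]];
    simpl;
    match goal with
    | |- exists e, _ /\ forall mo, ?m0 = mo \/ _ -> (-1) ^ ?g mo = e => exists ((-1) ^ g m0)
    | |- _ => exists 1
    end;
    (split; [simpl; ring |]); intros mo Hmo; repeat destruct Hmo as [<- | Hmo];
    solve [simpl; ring | contradiction].
Qed.

Section Reflection.

Variable f : nat -> R -> R.
Hypothesis f_parity : forall n t, f n (- t) = (-1) ^ n * f n t.

Lemma mono_eval_refl s m q x :
  coord q s = 0 -> mono_eval f s m (refl q x) = (-1) ^ mord q m * mono_eval f s m x.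
Proof.
  destruct x as [[x0 x1] x2], s as [[s0 s1] s2].
  destruct q as [|[|q]]; simpl; intros Hs; subst; unfold mono_eval; simpl;
    match goal with |- context [f _ (- ?a - 0)] => replace (- a - 0) with (- (a - 0)) by ring end;
    rewrite f_parity; ring.
Qed.

Lemma meval_refl_sq s L q x :
  coord q s = 0 -> (exists e, e ^ 2 = 1 /\ forall mo, In mo L -> (-1) ^ mord q mo = e) ->
  meval f s L (refl q x) ^ 2 = meval f s L x ^ 2.
Proof.
  intros Hs [e [He HL]].
  assert (Hrefl : meval f s L (refl q x) = e * meval f s L x).
  { unfold meval, lsum. induction L as [|m L IH]; simpl; [ring |].
    rewrite mono_eval_refl, HL, IH by (auto || (intros; apply HL; now right) || now left). ring. }
  rewrite Hrefl. replace ((e * meval f s L x) ^ 2) with (e ^ 2 * meval f s L x ^ 2) by ring.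
  rewrite He. ring.
Qed.

End Reflection.

Lemma cube_energy_refl k q x : coord q (centre k) = 0 -> cube_energy k (refl q x) = cube_energy k x.
Proof.
  intros Hs. unfold cube_energy, sum3.
  rewrite !(fun i j m => meval_refl_sq _ (bump_parity rad) (centre k) (mdiff m (template i j)) q x Hs
                          (template_parity i j m q)).
  reflexivity.
Qed.

Lemma moment_off_axis p k : (p < 3)%nat -> (k < 6)%nat -> p <> axis k -> moment p k = 0.
Proof.
  intros Hp3 Hk Hp. apply (int_cube_odd _ p).
  - apply separable_cube_integrable, separable_moment_density.
  - intros x. rewrite coord_refl, cube_energy_refl; [ring |].
    destruct k as [|[|[|[|[|[|k]]]]]]; try lia; destruct p as [|[|[|p]]]; simpl in *; try lia; reflexivity.
Qed.

Lemma sum3_nonneg (F : nat -> R) : (forall i, 0 <= F i) -> 0 <= sum3 F.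
Proof. intros HF. unfold sum3. pose proof (HF 0%nat). pose proof (HF 1%nat). pose proof (HF 2%nat). lra. Qed.

Lemma sum3_ge_term (F : nat -> R) i : (i < 3)%nat -> (forall i, 0 <= F i) -> F i <= sum3 F.
Proof.
  intros Hi HF. unfold sum3. pose proof (HF 0%nat). pose proof (HF 1%nat). pose proof (HF 2%nat).
  destruct i as [|[|[|i]]]; try lia; lra.
Qed.

(* A single monomial, so its energy factorizes into one-dimensional integrals. *)
Definition probe (k : nat) (x : pt) : R := meval (bump rad) (centre k) (mdiff 2 (template 0 0)) x.

Lemma probe_le_cube_energy k x : probe k x ^ 2 <= cube_energy k x.
Proof.
  assert (Hsq : forall i j q, 0 <= meval (bump rad) (centre k) (mdiff q (template i j)) x ^ 2)
    by (intros; apply pow2_ge_0).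
  unfold cube_energy. eapply Rle_trans; [| apply (sum3_ge_term _ 0); [lia |]].
  2: { intros i. do 2 (apply sum3_nonneg; intros). apply Hsq. }
  eapply Rle_trans; [| apply (sum3_ge_term _ 0); [lia |]].
  2: { intros j. apply sum3_nonneg; intros. apply Hsq. }
  apply (sum3_ge_term (fun q => meval (bump rad) (centre k) (mdiff q (template 0 0)) x ^ 2) 2);
    [lia | intros; apply Hsq].
Qed.

Lemma in_cube_axis k x : (k < 6)%nat -> in_cube (centre k) x -> 13 / 10 <= sgn k * coord (axis k) x.
Proof.
  intros Hk Hx. pose proof (Hx (axis k) ltac:(destruct k as [|[|[|[|[|[|k]]]]]]; simpl; lia)) as H.
  apply Rabs_def2 in H. unfold rad in H.
  destruct k as [|[|[|[|[|[|k]]]]]]; try lia; simpl in *; lra.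
Qed.

Lemma moment_density_lower_bound k x : (k < 6)%nat ->
  13 / 10 * probe k x ^ 2 <= sgn k * (coord (axis k) x * cube_energy k x).
Proof.
  intros Hk. destruct (classic (in_cube (centre k) x)) as [Hin | Hout].
  - pose proof (in_cube_axis k x Hk Hin). pose proof (probe_le_cube_energy k x).
    pose proof (pow2_ge_0 (probe k x)). nra.
  - assert (Hz : forall L, meval (bump rad) (centre k) L x = 0) by (intros; now apply meval_outside).
    unfold probe, cube_energy, sum3. rewrite !Hz. simpl. lra.
Qed.

Lemma RInt_bump_sq_pos n a : Rabs a <= 3 / 2 ->
  0 < RInt (fun u => bump rad n (u - a) * bump rad n (u - a)) (-2) 2.
Proof.
  intros Ha. destruct (bump_nonzero rad n ltac:(unfold rad; lra)) as [t0 Ht0].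
  assert (Ht : Rabs t0 < rad).
  { destruct (Rlt_le_dec (Rabs t0) rad) as [Hlt | Hle]; [exact Hlt |].
    exfalso. apply Ht0, bump_support, Hle. }
  apply Rabs_def2 in Ht. apply Rabs_le_between in Ha. unfold rad in Ht.
  apply (RInt_pos _ _ _ (t0 + a)).
  - intros u. apply continuous_Rmult; apply (ex_derive_continuous (K := R_AbsRing) (V := R_NormedModule));
      eexists; apply is_derive_shift, bump_tower.
  - intros u. apply Rle_0_sqr.
  - lra.
  - replace (t0 + a - a) with t0 by ring. pose proof (Rsqr_pos_lt _ Ht0). unfold Rsqr in *. lra.
Qed.

Lemma centre_bound q k : Rabs (coord q (centre k)) <= 3 / 2.
Proof.
  assert (H0 : Rabs 0 <= 3 / 2) by (rewrite Rabs_R0; lra).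
  assert (Hp : Rabs (1 * (3 / 2)) <= 3 / 2) by (rewrite Rabs_right; lra).
  assert (Hn : Rabs (-1 * (3 / 2)) <= 3 / 2) by (rewrite Rabs_left; lra).
  destruct k as [|[|[|[|[|[|k]]]]]]; destruct q as [|[|q]]; simpl; assumption.
Qed.

Lemma probe_energy_pos k : 0 < int_cube (fun x => probe k x ^ 2).
Proof.
  set (t := mono_sep (bump rad) (centre k) (Mono 2 1 3 1)).
  rewrite (int_cube_ext _ (sep_eval (sep_mul t t)))
    by (intros x; unfold probe, meval, lsum, sep_eval, mono_eval; simpl; ring).
  rewrite int_cube_sep_eval.
  - unfold sep_integral, t, sep_mul, mono_sep.
    cbn [scoef sfun0 sfun1 sfun2 mcoef mord0 mord1 mord2].
    pose proof (RInt_bump_sq_pos 1 _ (centre_bound 0 k)).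
    pose proof (RInt_bump_sq_pos 3 _ (centre_bound 1 k)).
    pose proof (RInt_bump_sq_pos 1 _ (centre_bound 2 k)).
    repeat apply Rmult_lt_0_compat; lra.
  - intros u. destruct (mono_sep_continuous (bump rad) (centre k) (Mono 2 1 3 1) (bump_tower rad) u)
      as [H0 [H1 H2]].
    repeat split; apply continuous_Rmult; assumption.
Qed.

Lemma moment_on_axis k : (k < 6)%nat -> 0 < sgn k * moment (axis k) k.
Proof.
  intros Hk.
  assert (Hsep_probe : separable (fun x => probe k x ^ 2)).
  { apply (separable_ext (fun x => probe k x * probe k x)); [intros; ring |].
    apply separable_mult; apply separable_meval, bump_tower. }
  assert (Hnn : 0 <= int_cube (fun x => sgn k * (coord (axis k) x * cube_energy k x)
                                        + - (13 / 10) * probe k x ^ 2)).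
  { apply int_cube_nonneg.
    - apply separable_cube_integrable, separable_plus; apply separable_scal;
        [apply separable_moment_density | exact Hsep_probe].
    - intros x. pose proof (moment_density_lower_bound k x Hk). lra. }
  rewrite int_cube_plus, !int_cube_scal in Hnn by
    (apply separable_moment_density || exact Hsep_probe
     || (apply separable_scal; apply separable_moment_density || exact Hsep_probe)).
  pose proof (probe_energy_pos k). unfold moment. lra.
Qed.

(** * The prescribed moments *)

Lemma sum6_axis (G : nat -> R) p : (p < 3)%nat ->
  (forall k, (k < 6)%nat -> p <> axis k -> G k = 0) -> sum6 G = G p + G (p + 3)%nat.
Proof.
  intros Hp HG. unfold sum6.
  destruct p as [|[|[|p]]]; try lia; simpl.
  - rewrite (HG 1%nat), (HG 2%nat), (HG 4%nat), (HG 5%nat) by (simpl; lia). ring.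
  - rewrite (HG 0%nat), (HG 2%nat), (HG 3%nat), (HG 5%nat) by (simpl; lia). ring.
  - rewrite (HG 0%nat), (HG 1%nat), (HG 3%nat), (HG 4%nat) by (simpl; lia). ring.
Qed.

(* The moment of box [k] has the sign [sgn k], so of the two boxes on the [x_p]-axis
   the one matching the sign of [beta p] is switched on and the other is switched off. *)
Definition coeff (beta : nat -> R) (k : nat) : R :=
  sqrt (Rmax (sgn k * beta (axis k)) 0 / (sgn k * moment (axis k) k)).

Lemma coeff_moment beta k : (k < 6)%nat ->
  coeff beta k ^ 2 * moment (axis k) k = sgn k * Rmax (sgn k * beta (axis k)) 0.
Proof.
  intros Hk. pose proof (moment_on_axis k Hk) as Hpos.
  unfold coeff. rewrite pow2_sqrt by (apply Rdiv_le_0_compat; [apply Rmax_r | exact Hpos]).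
  destruct k as [|[|[|[|[|[|k]]]]]]; try lia; simpl in *; field; lra.
Qed.

Lemma Rmax_pos_sub_neg (b : R) : Rmax b 0 - Rmax (- b) 0 = b.
Proof. unfold Rmax. destruct (Rle_dec b 0), (Rle_dec (- b) 0); lra. Qed.

Lemma weighted_energy_coeff beta p : (p < 3)%nat ->
  sum6 (fun k => coeff beta k ^ 2 * moment p k) = beta p.
Proof.
  intros Hp. rewrite (sum6_axis _ p Hp) by (intros k Hk Hne; rewrite moment_off_axis by assumption; ring).
  pose proof (coeff_moment beta p ltac:(lia)) as Hplus.
  pose proof (coeff_moment beta (p + 3) ltac:(lia)) as Hminus.
  pose proof (Rmax_pos_sub_neg (beta p)).
  assert (Hidx : axis p = p /\ axis (p + 3) = p /\ sgn p = 1 /\ sgn (p + 3) = -1)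
    by (destruct p as [|[|[|p]]]; try lia; repeat split).
  destruct Hidx as [Hax [Hax3 [Hsgn Hsgn3]]].
  rewrite Hax, Hsgn, !Rmult_1_l in Hplus. rewrite Hax3, Hsgn3 in Hminus.
  replace (-1 * beta p) with (- beta p) in Hminus by ring. lra.
Qed.

Theorem theorem2p8 (beta : nat -> R) :
  exists sigma : tensor,
    tensor_smooth sigma /\ symmetric sigma /\ trace_free sigma /\
    div_free sigma /\
    (forall i j, (i < 3)%nat -> (j < 3)%nat -> compact_support_in annulus1 (sigma i j)) /\
    (forall x, Lop sigma x = 0) /\
    (forall p, (p < 3)%nat ->
       int_cube (fun x => coord p x * grad_sq sigma x) = beta p).
Proof.
  exists (copies_tensor (bump rad) (coeff beta)).
  pose proof (bump_tower rad) as Htower.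
  split; [now apply copies_tensor_smooth |].
  split; [apply copies_tensor_symmetric |].
  split; [apply copies_tensor_trace_free |].
  split; [now apply copies_tensor_div_free |].
  split; [intros i j _ _; apply copies_support |].
  split; [intros x; now apply copies_tensor_L |].
  intros p Hp. rewrite int_cube_weighted_energy. now apply weighted_energy_coeff.
Qed.
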